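(* Let $\beta>0$, $f:[-1,1]\to\mathbb{R}$ any function, $g(r)=\frac12\log(1-r^2)+\frac{\beta^2}{2}(1-r^2)^2$ and $\tilde{\mathcal{B}}(\alpha,r)=f(r\alpha)+\sqrt2\beta r^2\sqrt{1-\alpha^2}+g(r)$. Then $r\mapsto\tilde{\mathcal{B}}(0,r)$ is strictly decreasing on $[0,1)$. *)

From Stdlib Require Import Reals.
Open Scope R_scope.

Definition g (beta r : R) : R :=
  / 2 * ln (1 - r ^ 2) + beta ^ 2 / 2 * (1 - r ^ 2) ^ 2.

Definition Btilde (f : R -> R) (beta alpha r : R) : R :=
  f (r * alpha) + sqrt 2 * beta * r ^ 2 * sqrt (1 - alpha ^ 2) + g beta r.

(* Substituting t = 1 - r^2, the function r |-> Btilde f beta 0 r becomes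
   f 0 + sqrt 2 beta (1 - t) + ln t / 2 + beta^2 t^2 / 2, so it suffices that this
   is strictly increasing in t > 0.  Bounding the logarithmic increment below by
   the arithmetic mean, ln t1 - ln t2 > 2 (t1 - t2) / (t1 + t2), the increment
   of the whole expression exceeds
     (t1 - t2) (beta (t1 + t2) - sqrt 2)^2 / (2 (t1 + t2)) >= 0. *)
From Stdlib Require Import Reals Lra.
From Coquelicot Require Import Coquelicot.
Open Scope R_scope.

Lemma ln_gt_mean_ratio (x : R) : 1 < x -> 2 * (x - 1) / (x + 1) < ln x.
Proof.
  intros Hx.
  set (psi := fun y => ln y - 2 * (y - 1) / (y + 1)).
  destruct (MVT_cor2 psi (fun y => / y - 4 / (y + 1) ^ 2) 1 x Hx)
    as [c [Hincr Hc]].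
  - intros c Hc. apply is_derive_Reals. unfold psi. auto_derive.
    + repeat split; lra.
    + field. lra.
  - assert (Hderiv_pos : 0 < / c - 4 / (c + 1) ^ 2).
    { replace (/ c - 4 / (c + 1) ^ 2) with ((c - 1) ^ 2 / (c * (c + 1) ^ 2))
        by (field; lra).
      apply Rdiv_lt_0_compat; [nra | apply Rmult_lt_0_compat; nra]. }
    assert (Hpsi : psi 1 < psi x) by nra.
    unfold psi in Hpsi. rewrite ln_1 in Hpsi. lra.
Qed.

Lemma ln_sub_gt_mean_ratio (a b : R) :
  0 < b < a -> 2 * (a - b) / (a + b) < ln a - ln b.
Proof.
  intros Hab.
  rewrite <- ln_div by lra.
  replace (2 * (a - b) / (a + b)) with (2 * (a / b - 1) / (a / b + 1))
    by (field; lra).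
  apply ln_gt_mean_ratio.
  apply (Rmult_lt_reg_r b); [lra |]. field_simplify; lra.
Qed.

Definition Btilde0_in_t (beta t : R) : R :=
  sqrt 2 * beta * (1 - t) + / 2 * ln t + beta ^ 2 / 2 * t ^ 2.

Lemma Btilde0_in_tE (f : R -> R) (beta r : R) :
  Btilde f beta 0 r = f 0 + Btilde0_in_t beta (1 - r ^ 2).
Proof.
  unfold Btilde, g, Btilde0_in_t.
  rewrite Rmult_0_r.
  replace (1 - 0 ^ 2) with 1 by ring.
  rewrite sqrt_1. ring.
Qed.

Lemma Btilde0_in_t_increasing (beta t1 t2 : R) :
  0 < t2 < t1 -> Btilde0_in_t beta t2 < Btilde0_in_t beta t1.
Proof.
  intros Ht.
  assert (Hln := ln_sub_gt_mean_ratio t1 t2 Ht).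
  assert (Hsqrt2 : sqrt 2 ^ 2 = 2) by (apply pow2_sqrt; lra).
  set (s := t1 + t2) in *.
  assert (Hs : 0 < s) by (unfold s; lra).
  assert (Hsquare : / s - sqrt 2 * beta + beta ^ 2 / 2 * s
                    = (beta * s - sqrt 2) ^ 2 / (2 * s)).
  { replace ((beta * s - sqrt 2) ^ 2 / (2 * s))
      with (sqrt 2 ^ 2 / (2 * s) - sqrt 2 * beta + beta ^ 2 / 2 * s) by (field; lra).
    rewrite Hsqrt2. field. lra. }
  assert (Hsquare_nonneg : 0 <= (beta * s - sqrt 2) ^ 2 / (2 * s)).
  { apply Rdiv_le_0_compat; [apply pow2_ge_0 | lra]. }
  assert (Hlower : (t1 - t2) * (/ s - sqrt 2 * beta + beta ^ 2 / 2 * s)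
    < Btilde0_in_t beta t1 - Btilde0_in_t beta t2).
  { unfold Btilde0_in_t.
    replace (2 * (t1 - t2) / s) with (2 * ((t1 - t2) * / s)) in Hln
      by (field; lra).
    replace ((t1 - t2) * (/ s - sqrt 2 * beta + beta ^ 2 / 2 * s))
      with ((t1 - t2) * / s + sqrt 2 * beta * (t2 - t1)
            + beta ^ 2 / 2 * (t1 ^ 2 - t2 ^ 2)) by (unfold s; ring).
    lra. }
  assert (Hincrement_nonneg : 0 <= (t1 - t2) * (/ s - sqrt 2 * beta + beta ^ 2 / 2 * s))
    by (rewrite Hsquare; apply Rmult_le_pos; lra).
  lra.
Qed.

Theorem lemma5p4 (beta : R) (f : R -> R) (hbeta : 0 < beta) :
  forall r1 r2 : R, 0 <= r1 -> r1 < r2 -> r2 < 1 ->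
    Btilde f beta 0 r2 < Btilde f beta 0 r1.
Proof.
  intros r1 r2 H1 H12 H2.
  rewrite !Btilde0_in_tE.
  apply Rplus_lt_compat_l, Btilde0_in_t_increasing.
  nra.
Qed.
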